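(* Let $X,Y\in\mathbb{S}^2_{++}$. Then $X\#_tY=X*_tY$ for all $t\in[0,1]$, where $X\#_tY=X^{1/2}(X^{-1/2}YX^{-1/2})^tX^{1/2}$ (all powers being the principal powers of symmetric positive definite matrices).
   Context: $\mathbb{S}^n_{++}$ denotes the set of real symmetric positive definite $n\times n$ matrices. For $X,Y\in\mathbb{S}^n_{++}$ the matrix $YX^{-1}$ has real positive eigenvalues; let $\alpha=\lambda_{\min}(YX^{-1})$ and $\beta=\lambda_{\max}(YX^{-1})$. For $0<\alpha\le\beta$ and $t\in\mathbb{R}$ set $\varphi_{\alpha\beta}(t)=\frac{\beta^t-\alpha^t}{\beta-\alpha}$ and $\psi_{\alpha\beta}(t)=\frac{\beta\alpha^t-\alpha\beta^t}{\beta-\alpha}$ if $\beta>\alpha$, and $\varphi_{\alpha\beta}(t)=t\alpha^{t-1}$, $\psi_{\alpha\beta}(t)=(1-t)\alpha^t$ if $\beta=\alpha$. The Thompson geodesic from $X$ to $Y$ is $X*_tY=\varphi_{\alpha\beta}(t)\,Y+\psi_{\alpha\beta}(t)\,X$. *)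

From HB Require Import structures.
From mathcomp Require Import all_boot all_order all_algebra.
From mathcomp Require Import boolp classical_sets reals exp.
From Stdlib Require Import ClassicalEpsilon.
Set Implicit Arguments. Unset Strict Implicit. Unset Printing Implicit Defensive.
Import Order.TTheory GRing.Theory Num.Theory.
Local Open Scope ring_scope.

Definition spd (R : realType) (n : nat) (A : 'M[R]_n) : Prop :=
  A^T = A /\ forall v : 'rV[R]_n, v != 0 -> 0 < (v *m A *m v^T) 0 0.

Definition spd_decomp (R : realType) (n : nat) (A : 'M[R]_n)
  (p : 'M[R]_n * 'rV[R]_n) : Prop :=
  p.1 *m p.1^T = 1%:M /\ (forall i, 0 < p.2 0 i) /\
  A = p.1^T *m diag_mx p.2 *m p.1.

(* Principal real power A^t of a symmetric positive definite matrix: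
   U^T diag(d_i^t) U for a spectral decomposition (independent of the choice);
   0 if A has no such decomposition (i.e. A is not SPD). *)
Definition mxpowR (R : realType) (n : nat) (A : 'M[R]_n) (t : R) : 'M[R]_n :=
  let p := epsilon (inhabits (0, 0)) (spd_decomp A) in
  if pselect (exists q, spd_decomp A q) then
    p.1^T *m diag_mx (\row_i (p.2 0 i `^ t)) *m p.1
  else 0.

Definition geomean (R : realType) (n : nat) (X Y : 'M[R]_n) (t : R) : 'M[R]_n :=
  mxpowR X (2^-1) *m
  mxpowR (mxpowR X (- 2^-1) *m Y *m mxpowR X (- 2^-1)) t *m
  mxpowR X (2^-1).

Definition is_lambda_min (R : realType) (n : nat) (M : 'M[R]_n) (a : R) :=
  eigenvalue M a /\ forall mu, eigenvalue M mu -> a <= mu.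
Definition is_lambda_max (R : realType) (n : nat) (M : 'M[R]_n) (b : R) :=
  eigenvalue M b /\ forall mu, eigenvalue M mu -> mu <= b.

Definition phi_ab (R : realType) (a b t : R) : R :=
  if b != a then (b `^ t - a `^ t) / (b - a) else t * a `^ (t - 1).
Definition psi_ab (R : realType) (a b t : R) : R :=
  if b != a then (b * a `^ t - a * b `^ t) / (b - a) else (1 - t) * a `^ t.

(* Thompson geodesic X *_t Y with a = lambda_min(Y X^-1), b = lambda_max(Y X^-1). *)
Definition thompson (R : realType) (n : nat) (X Y : 'M[R]_n) (a b t : R) :=
  phi_ab a b t *: Y + psi_ab a b t *: X.

From HB Require Import structures.
From mathcomp Require Import all_boot all_order all_algebra.
From mathcomp Require Import boolp classical_sets reals exp.
From Stdlib Require Import ClassicalEpsilon.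
From mathcomp Require Import ring lra.
Set Implicit Arguments. Unset Strict Implicit. Unset Printing Implicit Defensive.
Import Order.TTheory GRing.Theory Num.Theory.
Local Open Scope ring_scope.

(* In dimension two, [Y X^-1] has at most two eigenvalues, so its spectrum is
   exactly {a, b}.  The matrix M = X^{-1/2} Y X^{-1/2} is positive definite and
   similar to [Y X^-1], so M = U^T diag(d) U with every d_i in {a, b}.  On {a, b}
   the function x |-> x^t agrees with the affine map x |-> phi(t) x + psi(t),
   hence M^t = phi(t) M + psi(t) I, and conjugating by X^{1/2} turns this into
   X #_t Y = phi(t) Y + psi(t) X. *)

Section SpectralPower.
Variables (R : realType) (n : nat).

Definition spectral_pow (p : 'M[R]_n * 'rV[R]_n) (t : R) : 'M[R]_n :=
  p.1^T *m diag_mx (\row_i (p.2 0 i `^ t)) *m p.1.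

Lemma tr_spectral_pow p t : (spectral_pow p t)^T = spectral_pow p t.
Proof. by rewrite /spectral_pow !trmx_mul trmxK tr_diag_mx mulmxA. Qed.

Lemma mxpowR_spectral (A : 'M[R]_n) p0 : spd_decomp A p0 ->
  exists2 p, spd_decomp A p & mxpowR A =1 spectral_pow p.
Proof.
move=> Ap0; have Aex : exists q, spd_decomp A q by exists p0.
exists (epsilon (inhabits (0, 0)) (spd_decomp A)); first exact: epsilon_spec.
by move=> t; rewrite /mxpowR; case: pselect.
Qed.

Variables (A : 'M[R]_n) (p : 'M[R]_n * 'rV[R]_n).
Hypothesis Ap : spd_decomp A p.

Lemma spectral_powD s r :
  spectral_pow p s *m spectral_pow p r = spectral_pow p (s + r).
Proof.
have [U1 [d_gt0 _]] := Ap.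
rewrite /spectral_pow !mulmxA -[_ *m p.1 *m p.1^T]mulmxA U1 mulmx1.
rewrite -[_ *m diag_mx _ *m diag_mx _]mulmxA mulmx_diag; congr (_ *m diag_mx _ *m _).
by apply/rowP => i; rewrite !mxE powRD // (gt_eqF (d_gt0 i)) implybT.
Qed.

Lemma spectral_pow0 : spectral_pow p 0 = 1%:M.
Proof.
have [U1 _] := Ap; rewrite /spectral_pow.
have -> : \row_i (p.2 0 i `^ 0) = const_mx 1 by apply/rowP => i; rewrite !mxE powRr0.
by rewrite diag_const_mx mulmx1 (mulmx1C U1).
Qed.

Lemma spectral_pow1 : spectral_pow p 1 = A.
Proof.
have [_ [d_gt0 ->]] := Ap; rewrite /spectral_pow.
by congr (_ *m diag_mx _ *m _); apply/rowP => i; rewrite !mxE powRr1 // ltW.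
Qed.

Lemma spectral_eigenvalue j : eigenvalue A (p.2 0 j).
Proof.
have [U1 [_ ->]] := Ap; apply/eigenvalueP.
exists (delta_mx 0 j *m p.1).
  have eD : delta_mx 0 j *m diag_mx p.2 = p.2 0 j *: delta_mx (0 : 'I_1) j.
    rewrite mul_mx_diag; apply/matrixP => i k; rewrite !mxE.
    by case: (eqVneq k j) => [->|_]; rewrite ?andbF ?mulr0 ?mul0r // mulrC.
  by rewrite !mulmxA -[_ *m p.1 *m p.1^T]mulmxA U1 mulmx1 eD -scalemxAl.
apply/eqP => /(congr1 (mulmx^~ p.1^T)).
rewrite mul0mx -mulmxA U1 mulmx1 => /matrixP /(_ 0 j).
by rewrite !mxE !eqxx => /eqP; rewrite oner_eq0.
Qed.

Lemma spectral_pow_affine t c d :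
  (forall mu, 0 < mu -> eigenvalue A mu -> mu `^ t = c * mu + d) ->
  spectral_pow p t = c *: A + d *: 1%:M.
Proof.
have [U1 [d_gt0 Adef]] := Ap => affine; rewrite /spectral_pow.
have -> : \row_i (p.2 0 i `^ t) = c *: p.2 + d *: const_mx 1.
  by apply/rowP => i; rewrite !mxE mulr1 affine // spectral_eigenvalue.
have -> : diag_mx (c *: p.2 + d *: const_mx 1) = c *: diag_mx p.2 + d *: 1%:M.
  apply/matrixP => i j; rewrite !mxE.
  by case: (eqVneq i j) => [->|_]; rewrite ?mulr1n ?mulr0n ?mulr0 ?addr0 ?mulr1.
rewrite mulmxDr mulmxDl -!scalemxAr -!scalemxAl mulmx1.
by rewrite (mulmx1C U1) -Adef.
Qed.

End SpectralPower.

Lemma eigenvalue_conj (F : fieldType) (n : nat) (B P Q : 'M[F]_n) mu :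
  P *m Q = 1%:M -> eigenvalue B mu -> eigenvalue (Q *m B *m P) mu.
Proof.
move=> PQ1 /eigenvalueP [v vB v_neq0]; apply/eigenvalueP; exists (v *m P).
  by rewrite !mulmxA -[v *m P *m Q]mulmxA PQ1 mulmx1 vB scalemxAl.
apply: contraNneq v_neq0 => vP0.
by rewrite -[v]mulmx1 -PQ1 mulmxA vP0 mul0mx.
Qed.

Lemma spd_congr (R : realType) (n : nat) (Y Q : 'M[R]_n) :
  Q \in unitmx -> spd Y -> spd (Q^T *m Y *m Q).
Proof.
move=> Q_unit [YT Y_pos]; split; first by rewrite !trmx_mul trmxK YT mulmxA.
move=> v v_neq0; have -> : v *m (Q^T *m Y *m Q) *m v^T = v *m Q^T *m Y *m (v *m Q^T)^T.
  by rewrite !trmx_mul trmxK !mulmxA.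
apply: Y_pos; apply: contraNneq v_neq0 => vQ0.
by rewrite -[v](mulmxK (_ : Q^T \in unitmx)) ?unitmx_tr // vQ0 mul0mx.
Qed.

Lemma mxpowR_half (R : realType) (n : nat) (X : 'M[R]_n) p0 : spd_decomp X p0 ->
  [/\ mxpowR X (2^-1) *m mxpowR X (- 2^-1) = 1%:M,
      mxpowR X (- 2^-1) *m mxpowR X (2^-1) = 1%:M,
      mxpowR X (2^-1) *m mxpowR X (2^-1) = X &
      (mxpowR X (- 2^-1))^T = mxpowR X (- 2^-1)].
Proof.
move=> Xp0; have [p Xp Xpow] := mxpowR_spectral Xp0.
rewrite !Xpow tr_spectral_pow !(spectral_powD Xp) addrN addNr (spectral_pow0 Xp).
rewrite -(spectral_pow1 Xp); split=> //; congr spectral_pow.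
by have -> : 2^-1 + 2^-1 = 1 :> R by field.
Qed.

Section GeometricMean.
Variables (R : realType) (n : nat).
Hypothesis spd_spectral : forall A : 'M[R]_n, spd A -> exists p, spd_decomp A p.

Lemma geomean_affine (X Y : 'M[R]_n) t c d : spd X -> spd Y ->
  (forall mu, 0 < mu -> eigenvalue (Y *m invmx X) mu -> mu `^ t = c * mu + d) ->
  geomean X Y t = c *: Y + d *: X.
Proof.
move=> sX sY affine; have [pX XpX] := spd_spectral sX.
have [PQ1 QP1 PP QT] := mxpowR_half XpX.
rewrite /geomean; set P := mxpowR X (2^-1) in PQ1 QP1 PP *.
set Q := mxpowR X (- 2^-1) in PQ1 QP1 QT *; set M := Q *m Y *m Q.
have sM : spd M by rewrite /M -{1}QT; apply: spd_congr sY; case: (mulmx1_unit QP1).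
have invX : invmx X = Q *m Q.
  have XQQ : X *m (Q *m Q) = 1%:M by rewrite -PP mulmxA -[P *m P *m Q]mulmxA PQ1 mulmx1.
  by rewrite -[RHS](mulKmx (mulmx1_unit XQQ).1) XQQ mulmx1.
have YX : Y *m invmx X = P *m M *m Q by rewrite invX /M !mulmxA PQ1 mul1mx.
have [pM0 MpM0] := spd_spectral sM; have [pM MpM Mpow] := mxpowR_spectral MpM0.
rewrite Mpow (spectral_pow_affine MpM (c := c) (d := d)) => [|mu mu_gt0 Mmu]; last first.
  by apply: affine mu_gt0 _; rewrite YX; apply: eigenvalue_conj.
rewrite mulmxDr mulmxDl -!scalemxAr -!scalemxAl mulmx1 PP.
by rewrite /M !mulmxA PQ1 mul1mx -mulmxA QP1 mulmx1.
Qed.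

End GeometricMean.

Lemma ord2P (i : 'I_2) : i = 0 \/ i = 1.
Proof. by case: i => [[|[|//]] Hi]; [left|right]; apply/val_inj. Qed.

Lemma mulmx2E (R : pzSemiRingType) m p (A : 'M[R]_(m, 2)) (B : 'M[R]_(2, p)) i j :
  (A *m B) i j = A i 0 * B 0 j + A i 1 * B 1 j.
Proof.
rewrite mxE !big_ord_recl big_ord0 addr0.
by congr (A i _ * B _ j + A i _ * B _ j); apply/val_inj.
Qed.

Lemma matrix2P (T : Type) (A B : 'M[T]_2) :
  A 0 0 = B 0 0 -> A 0 1 = B 0 1 -> A 1 0 = B 1 0 -> A 1 1 = B 1 1 -> A = B.
Proof.
move=> e00 e01 e10 e11; apply/matrixP => i j.
by case: (ord2P i) => ->; case: (ord2P j) => ->.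
Qed.

Definition mx2 (T : Type) (x y z w : T) : 'M[T]_2 :=
  \matrix_(i, j) if i == 0 then (if j == 0 then x else y) else (if j == 0 then z else w).

Definition row2 (T : Type) (x y : T) : 'rV[T]_2 := \row_j if j == 0 then x else y.

Section TwoByTwo.
Variable R : realType.

Lemma spd2_quad (A : 'M[R]_2) x y : spd A -> (x, y) != (0, 0) ->
  0 < x ^+ 2 * A 0 0 + 2 * x * y * A 0 1 + y ^+ 2 * A 1 1.
Proof.
move=> [AT A_pos] xy_neq0; have A10 : A 1 0 = A 0 1 by rewrite -{1}AT mxE.
have := A_pos (row2 x y); rewrite !mulmx2E !mxE /= A10.
have -> : (x * A 0 0 + y * A 0 1) * x + (x * A 0 1 + y * A 1 1) * y
  = x ^+ 2 * A 0 0 + 2 * x * y * A 0 1 + y ^+ 2 * A 1 1 by ring.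
apply; apply: contraNneq xy_neq0 => /rowP xy0.
by have := xy0 0; have := xy0 1; rewrite !mxE /= => -> ->.
Qed.

Lemma spd2_entries (A : 'M[R]_2) : spd A ->
  [/\ A 1 0 = A 0 1, 0 < A 0 0, 0 < A 1 1 & A 0 1 ^+ 2 < A 0 0 * A 1 1].
Proof.
move=> sA; have [AT _] := sA.
have A00_gt0 : 0 < A 0 0.
  by have := spd2_quad (x := 1) (y := 0) sA; rewrite xpair_eqE oner_eq0 => /(_ isT); lra.
split=> //; first by rewrite -{1}AT mxE.
  by have := spd2_quad (x := 0) (y := 1) sA; rewrite xpair_eqE oner_eq0 andbF => /(_ isT); lra.
have := spd2_quad (x := A 0 1) (y := - A 0 0) sA.
rewrite xpair_eqE oppr_eq0 (gt_eqF A00_gt0) andbF => /(_ isT).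
have -> : A 0 1 ^+ 2 * A 0 0 + 2 * A 0 1 * - A 0 0 * A 0 1 + (- A 0 0) ^+ 2 * A 1 1
  = A 0 0 * (A 0 0 * A 1 1 - A 0 1 ^+ 2) by ring.
by rewrite pmulr_rgt0 // subr_gt0.
Qed.

(* Rows of the rotation are the eigenvectors [(u, v)] for [l] and [(-v, u)] for [tr A - l]. *)
Lemma rotation_spd_decomp (A : 'M[R]_2) u v l :
  A 1 0 = A 0 1 -> u ^+ 2 + v ^+ 2 = 1 ->
  A 0 0 * u + A 0 1 * v = l * u -> A 0 1 * u + A 1 1 * v = l * v ->
  0 < l -> 0 < A 0 0 + A 1 1 - l ->
  spd_decomp A (mx2 u v (- v) u, row2 l (A 0 0 + A 1 1 - l)).
Proof.
move=> A10 + eig_u eig_v l_gt0 l'_gt0; rewrite /spd_decomp /= !expr2 => uv1.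
have U1 : mx2 u v (- v) u *m (mx2 u v (- v) u)^T = 1%:M.
  by apply: matrix2P; rewrite mulmx2E !mxE /=; lra.
split=> //; split; first by move=> i; case: (ord2P i) => ->; rewrite mxE.
have UA : mx2 u v (- v) u *m A = diag_mx (row2 l (A 0 0 + A 1 1 - l)) *m mx2 u v (- v) u.
  by apply: matrix2P; rewrite !mulmx2E !mxE /= ?A10; lra.
by rewrite -mulmxA -UA mulmxA (mulmx1C U1) mul1mx.
Qed.

Lemma spd2_spectral (A : 'M[R]_2) : spd A -> exists p, spd_decomp A p.
Proof.
move=> /spd2_entries [A10 A00_gt0 A11_gt0 det_gt0].
have [q0|q_neq0] := eqVneq (A 0 1) 0.
  exists (mx2 1 0 (- 0) 1, row2 (A 0 0) (A 0 0 + A 1 1 - A 0 0)).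
  by apply: rotation_spd_decomp; rewrite ?q0 ?expr2; lra.
(* [(q, s - h)] is an eigenvector for the larger eigenvalue [m + s]; it vanishes when [q = 0]. *)
set q := A 0 1 in A10 det_gt0 q_neq0 *.
set m := (A 0 0 + A 1 1) / 2; set h := (A 0 0 - A 1 1) / 2.
have A00E : A 0 0 = m + h by rewrite /m /h; field.
have A11E : A 1 1 = m - h by rewrite /m /h; field.
rewrite A00E A11E in det_gt0.
set s := Num.sqrt (h ^+ 2 + q ^+ 2).
have s_ge0 : 0 <= s by apply: sqrtr_ge0.
have q2E : q ^+ 2 = s ^+ 2 - h ^+ 2.
  by rewrite sqr_sqrtr ?addr_ge0 ?sqr_ge0 // addrC addKr.
have m_gt0 : 0 < m by rewrite /m; lra.
have s_lt_m : s < m by nra.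
set N := q ^+ 2 + (s - h) ^+ 2.
have N_gt0 : 0 < N.
  by rewrite /N ltr_wpDr ?sqr_ge0 // exprn_even_gt0.
set k := (Num.sqrt N)^-1.
have kN : k ^+ 2 * N = 1 by rewrite /k exprVn sqr_sqrtr ?mulVf ?gt_eqF // ltW.
exists (mx2 (k * q) (k * (s - h)) (- (k * (s - h))) (k * q),
        row2 (m + s) (A 0 0 + A 1 1 - (m + s))).
apply: rotation_spd_decomp => //.
- by rewrite -kN /N !exprMn mulrDr.
- by rewrite A00E -/q; ring.
- rewrite A11E -/q; transitivity (k * (q ^+ 2 + (m - h) * (s - h))); first ring.
  by rewrite q2E; ring.
- by lra.
- by rewrite A00E A11E; lra.
Qed.

End TwoByTwo.

Lemma size_uniq_eigenvalues (F : fieldType) (n : nat) (A : 'M[F]_n) (s : seq F) :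
  uniq s -> all (eigenvalue A) s -> (size s <= n)%N.
Proof.
move=> s_uniq s_eig; rewrite -ltnS -(size_char_poly A).
apply: max_poly_roots _ _ s_uniq; first exact/monic_neq0/char_poly_monic.
by apply/allP => x /(allP s_eig); rewrite eigenvalue_root_char.
Qed.

Lemma eigenvalue2_extreme (R : realType) (A : 'M[R]_2) a b mu :
  is_lambda_min A a -> is_lambda_max A b -> eigenvalue A mu -> mu = a \/ mu = b.
Proof.
move=> [Aa a_min] [Ab b_max] Amu.
have [a_le_mu mu_le_b] := (a_min _ Amu, b_max _ Amu).
have [ba|b_neq_a] := eqVneq b a.
  by left; apply/eqP; rewrite eq_le a_le_mu -ba mu_le_b.
have [->|mu_neq_a] := eqVneq mu a; first by left.
have [->|mu_neq_b] := eqVneq mu b; first by right.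
have : (size [:: a; b; mu] <= 2)%N; last by [].
apply: (size_uniq_eigenvalues (A := A)); last by apply/allP => x; rewrite !inE => /or3P [] /eqP ->.
by rewrite /= !inE negb_or !(eq_sym _ mu) eq_sym b_neq_a mu_neq_a mu_neq_b.
Qed.

Lemma powR_phi_psi (R : realType) (a b x t : R) : 0 < x -> x = a \/ x = b ->
  x `^ t = phi_ab a b t * x + psi_ab a b t.
Proof.
rewrite /phi_ab /psi_ab => x_gt0 x_ab; have [b_eq_a|b_neq_a] := eqVneq b a => /=.
  have <- : x = a by case: x_ab; rewrite ?b_eq_a.
  have x_neq0 : x != 0 by rewrite gt_eqF.
  by rewrite powRB ?x_neq0 ?implybT // powRr1 ?(ltW x_gt0) //; field.
by case: x_ab => ->; field; rewrite subr_eq0.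
Qed.

Theorem proposition3p2 (R : realType) (X Y : 'M[R]_2) (a b : R) :
  spd X -> spd Y ->
  is_lambda_min (Y *m invmx X) a -> is_lambda_max (Y *m invmx X) b ->
  forall t : R, 0 <= t <= 1 -> geomean X Y t = thompson X Y a b t.
Proof.
move=> sX sY a_min b_max t _.
apply: (geomean_affine (@spd2_spectral R)) sX sY _ => mu mu_gt0 eig_mu.
exact/powR_phi_psi/(eigenvalue2_extreme a_min b_max).
Qed.
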